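(* Let $p$ be a prime, $0<\alpha\le1$, $k$ a positive integer, and let $S\subseteq\mathbb{Z}_p$ be such that all $k$-wise sums of different elements of $S$ are distinct, excluding permutations of the summands (i.e., for any two $k$-element subsets $T,T'\subseteq S$, $\sum_{t\in T}t=\sum_{t\in T'}t$ in $\mathbb{Z}_p$ implies $T=T'$). Then $$\mathcal{C}^{\mathrm{bsgs1}}_\alpha(S)>\left(\alpha|S|/(2k)\right)^{k/(k+1)}.$$
   Context: The BSGS-1 $\alpha$-complexity $\mathcal{C}^{\mathrm{bsgs1}}_\alpha(S)$ of $S\subseteq\mathbb{Z}_p$ is the smallest integer $n$ such that there exist $X,Y\subseteq\mathbb{Z}_p$ with $|X|=|Y|=n$ and $|S\cap(X-Y)|\geq\alpha|S|$, where $X-Y=\{x-y\mid x\in X,y\in Y\}$ (computed in $\mathbb{Z}_p$). *)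

From mathcomp Require Import all_boot all_order all_algebra.
From mathcomp Require Import all_classical all_reals all_analysis.
Set Implicit Arguments. Unset Strict Implicit. Unset Printing Implicit Defensive.
Import GRing.Theory Num.Theory.
Local Open Scope ring_scope.

Definition diffset (p : nat) (X Y : {set 'F_p}) : {set 'F_p} :=
  [set x - y | x in X, y in Y].

Definition bsgs1_ok (R : realType) (p : nat) (alpha : R) (S : {set 'F_p}) (n : nat) : bool :=
  [exists X : {set 'F_p}, exists Y : {set 'F_p},
     [&& #|X| == n, #|Y| == n &
         alpha * (#|S|)%:R <= (#|S :&: diffset X Y|)%:R]].

Lemma bsgs1_ok_exists (R : realType) (p : nat) (alpha : R) (S : {set 'F_p}) :
  alpha <= 1 -> exists n, bsgs1_ok alpha S n.
Proof.
move=> a1; exists #|[set: 'F_p]%SET|; apply/existsP; exists [set: 'F_p]%SET; apply/existsP; exists [set: 'F_p]%SET.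
rewrite !eqxx /=.
have -> : S :&: diffset [set: 'F_p]%SET [set: 'F_p]%SET = S.
  apply/setP => z; rewrite inE; case: (z \in S) => //=.
  by apply/imset2P; exists z 0; rewrite ?inE // subr0.
by rewrite -[X in _ <= X]mul1r ler_wpM2r.
Qed.

Definition bsgs1_complexity (R : realType) (p : nat) (alpha : R) (S : {set 'F_p})
  (a1 : alpha <= 1) : nat :=
  ex_minn (bsgs1_ok_exists S a1).

Definition distinct_ksums (p : nat) (k : nat) (S : {set 'F_p}) : Prop :=
  forall T T' : {set 'F_p}, T \subset S -> T' \subset S -> #|T| = k -> #|T'| = k ->
    \sum_(t in T) t = \sum_(t in T') t -> T = T'.

(* Fix X, Y with |X| = |Y| = n and let m = |S ∩ (X - Y)|.  Choosing for each
   s in S ∩ (X - Y) one pair (x, y) in X × Y with x - y = s gives a bipartite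
   graph on two copies of Z_p with m edges and distinct labels x - y.  Around a
   cycle of length 2h the labels of the even and of the odd edges have the same
   sum, so for 2 <= h <= k they form two disjoint h-subsets of S with equal
   sums; padding both with the same k - h elements of S contradicts the
   distinctness of k-sums (if |S| < 2k, then m < 2k and there is nothing to
   prove).  Hence the graph has no cycle of length at most 2k.  Pruning
   vertices of small degree leaves a subgraph of minimum degree q + 1 with
   q ~ m / 2n, and there the q^k non-backtracking walks of length k from a
   vertex end at distinct vertices of one side, so q^k <= n.  This gives
   m^k < (2k)^k n^(k+1), i.e. n > (m / 2k)^(k/(k+1)). *)

From mathcomp Require Import all_boot all_order all_algebra.
From mathcomp Require Import all_classical all_reals all_analysis.
From mathcomp Require Import fintype finset zify.
Import GRing.Theory Num.Theory.
Set Implicit Arguments. Unset Strict Implicit. Unset Printing Implicit Defensive.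

Lemma sum_bool_card (I : finType) (A : {set I}) (b : pred I) :
  \sum_(i in A) (b i : nat) = #|[set i in A | b i]|.
Proof. by rewrite -big_mkcondr sum1dep_card. Qed.

Lemma exists_subset_card (T : finType) (A : {set T}) n :
  n <= #|A| -> exists2 B : {set T}, B \subset A & #|B| = n.
Proof.
case/card_geqP=> s [s_uniq <- sA]; exists [set x in s].
  by apply/subsetP=> x; rewrite inE => /sA.
by rewrite (eq_card (in_set (mem s))) (card_uniqP s_uniq).
Qed.

Lemma exists_transversal (aT rT : finType) (f : aT -> rT) (A : {set aT}) (B : {set rT}) :
  B \subset f @: A ->
  exists2 E : {set aT}, E \subset A & {in E &, injective f} /\ f @: E = B.
Proof.
move=> BfA; pose pre b := [pick a in A | f a == b].
exists [set a in A | (f a \in B) && (pre (f a) == Some a)].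
  by apply/subsetP => a /setIdP [].
split.
  move=> a a' /setIdP [_ /andP [_ /eqP pa]] /setIdP [_ /andP [_ /eqP pa']] faa'.
  by move: pa; rewrite faa' pa' => -[].
apply/setP => b; apply/imsetP/idP => [[a /setIdP [_ /andP [fB _]] ->] // | bB].
have [a pa] : exists a, pre b = Some a.
  rewrite /pre; case: pickP => [a _ | none]; first by exists a.
  have /imsetP [a aA fab] := subsetP BfA b bB.
  by have := none a; rewrite aA fab eqxx.
have /andP [aA /eqP fab] : (a \in A) && (f a == b).
  by move: pa; rewrite /pre; case: pickP => // a' ? [<-].
by exists a; rewrite // inE aA fab bB pa eqxx.
Qed.

Section DegreeSum.
Variables (V : finType) (adj : rel V).
Hypotheses (adj_sym : symmetric adj) (adj_irr : irreflexive adj).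

Definition deg (W : {set V}) u := #|[set w in W | adj u w]|.
Definition degsum (W : {set V}) := \sum_(u in W) deg W u.

Lemma degsumD1 (W : {set V}) u : u \in W -> degsum W = degsum (W :\ u) + (deg W u).*2.
Proof.
move=> uW; rewrite /degsum (big_setD1 _ uW) /=.
have degD1 v : v \in W :\ u -> deg W v = deg (W :\ u) v + adj v u.
  rewrite in_setD1 => /andP [vu vW].
  rewrite /deg (cardsD1 u) addnC inE uW /=; congr (_ + _).
  by apply: eq_card => w; rewrite !inE andbA.
rewrite (eq_bigr _ degD1) big_split /= sum_bool_card.
have -> : #|[set v in W :\ u | adj v u]| = deg W u.
  apply: eq_card => w; rewrite !inE adj_sym.
  by case: (w =P u) => [->|]; rewrite ?adj_irr ?andbF.
by rewrite -addnn; lia.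
Qed.

(* Deleting a vertex of degree at most q keeps the excess of the degree sum
   over 2q|W|, so a minimal such W has minimum degree above q. *)
Lemma exists_min_degree_subgraph (W0 : {set V}) q : (q * #|W0|).*2 < degsum W0 ->
  exists2 W : {set V}, W \subset W0 & W != set0 /\ {in W, forall u, q < deg W u}.
Proof.
move=> W0q.
pose P s := [exists W : {set V}, [&& W \subset W0, #|W| == s & (q * #|W|).*2 < degsum W]].
have exP : exists s, P s by exists #|W0|; apply/existsP; exists W0; rewrite subxx eqxx.
case: (ex_minnP exP) => s /existsP [W /and3P [WW0 /eqP Ws Wq]] s_min.
exists W => //; split.
  by apply: contraTneq Wq => ->; rewrite /degsum big_set0.
move=> u uW; rewrite ltnNge; apply/negP => deg_u.
have : P #|W :\ u|.
  apply/existsP; exists (W :\ u); rewrite eqxx (subset_trans (subsetDl _ _) WW0) /=.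
  move: Wq; rewrite (degsumD1 uW) (cardsD1 u W) uW.
  by move: (degsum _) (deg W u) #|W :\ u| deg_u => a b c; nia.
by move/s_min; rewrite -Ws (cardsD1 u W) uW; lia.
Qed.

End DegreeSum.

Section NonBacktrackingWalks.
Variables (V : finType) (adj : rel V) (side : V -> bool).
Hypothesis adj_side : forall u w, adj u w -> side w = ~~ side u.

Definition walk (f : nat -> V) L := forall t, t < L -> adj (f t) (f t.+1).
Definition nonbacktracking (f : nat -> V) L := forall t, t.+2 <= L -> f t != f t.+2.

Lemma walk_side f L : walk f L -> forall t, t <= L -> side (f t) = side (f 0) (+) odd t.
Proof.
move=> fw; elim=> [|t IH] tL; first by rewrite addbF.
by rewrite (adj_side (fw t tL)) IH ?(ltnW tL) //= addbN.
Qed.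

(* A shortest closed subwalk is a cycle; bipartiteness makes it even and
   non-backtracking rules out length 2. *)
Lemma closed_walk_even_cycle f L : walk f L -> nonbacktracking f L -> 0 < L -> f 0 = f L ->
  exists i h, [/\ 1 < h, i + h.*2 <= L, f i = f (i + h.*2) &
                  forall t u, t < u < h.*2 -> f (i + t) != f (i + u)].
Proof.
move=> fw fnb L0 fL.
pose P g := (0 < g) && [exists i : 'I_L.+1, (i + g <= L) && (f i == f (i + g))].
have exP : exists g, P g.
  by exists L; rewrite /P L0; apply/existsP; exists ord0; rewrite add0n leqnn fL eqxx.
case: (ex_minnP exP) => g /andP [g0 /existsP [[i /= _] /andP [igL /eqP fig]]] g_min.
have [h gh] : exists h, g = h.*2.
  exists g./2; rewrite even_halfK //.
  have iL : i <= L by lia.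
  have := walk_side fw iL; rewrite fig (walk_side fw igL) oddD.
  by case: (side (f 0)); case: (odd i); case: (odd g).
subst g; exists i, h; split => //.
- case: h {g_min} => [|[|h]] // in g0 fig igL *.
  have i2L : i.+2 <= L by lia.
  have i2 : i + 1.*2 = i.+2 by lia.
  by have := fnb i i2L; rewrite fig i2 eqxx.
- move=> t u /andP [tu uh]; apply/negP => /eqP ftu.
  have itL : i + t < L.+1 by lia.
  have : P (u - t).
    rewrite /P subn_gt0 tu; apply/existsP; exists (Ordinal itL) => /=.
    by rewrite ftu -addnA subnKC ?(ltnW tu) // eqxx andbT; lia.
  by move/g_min; lia.
Qed.

Hypothesis adj_sym : symmetric adj.

(* Follow w from j to j + M, then come back along w'. *)
Lemma splice_closed_walk w w' l j M : 0 < M -> j + M <= l ->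
  walk w l -> walk w' l -> nonbacktracking w l -> nonbacktracking w' l ->
  w j = w' j -> w (j + M) = w' (j + M) -> w (j + M).-1 != w' (j + M).-1 ->
  exists c, [/\ walk c M.*2, nonbacktracking c M.*2 & c 0 = c M.*2].
Proof.
move=> M0 jMl ww ww' wnb wnb' wj wjM wjM1.
pose c t := if t < M then w (j + t) else w' (j + (M.*2 - t)).
have cE1 t : t <= M -> c t = w (j + t).
  rewrite /c; case: ltnP => // Mt tM.
  have -> : t = M by lia.
  by rewrite wjM; congr w'; lia.
have cE2 t : M <= t -> c t = w' (j + (M.*2 - t)) by rewrite /c ltnNge => ->.
exists c; split.
- move=> t tM; case: (ltngtP t M) => tM'.
  + by rewrite !cE1 ?addnS; [apply: ww | |]; lia.
  + rewrite !cE2; try lia.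
    have -> : j + (M.*2 - t) = (j + (M.*2 - t.+1)).+1 by lia.
    by rewrite adj_sym; apply: ww'; lia.
  + have [a ea] : exists a, j + M = a.+1 by exists (j + M).-1; lia.
    rewrite cE1 ?tM' // cE2; last lia.
    have -> : j + (M.*2 - M.+1) = a by lia.
    by rewrite ea in wjM *; rewrite wjM adj_sym; apply: ww'; lia.
- move=> t tM; case: (ltngtP t.+1 M) => tM'.
  + by rewrite !cE1 ?addnS; [apply: wnb | |]; lia.
  + rewrite !cE2; try lia.
    have -> : j + (M.*2 - t) = (j + (M.*2 - t.+2)).+2 by lia.
    by rewrite eq_sym; apply: wnb'; lia.
  + rewrite cE1; last lia; rewrite cE2; last lia.
    have -> : j + t = (j + M).-1 by lia.
    by have -> : j + (M.*2 - t.+2) = (j + M).-1 by lia.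
- rewrite cE1 // cE2; last lia.
  by rewrite subnn addn0.
Qed.

Variable k : nat.
Hypothesis no_short_closed_walk : forall f L, 0 < L <= k.*2 ->
  walk f L -> nonbacktracking f L -> f 0 = f L -> False.

Lemma nonbacktracking_walk_uniq w w' l : l <= k ->
  walk w l -> walk w' l -> nonbacktracking w l -> nonbacktracking w' l ->
  w 0 = w' 0 -> w l = w' l -> forall t, t <= l -> w t = w' t.
Proof.
move=> lk ww ww' wnb wnb' w0 wl t0 t0l; apply/eqP; apply/negPn/negP => wt0.
pose P t := (t <= l) && (w t != w' t).
have exP : exists t, P t by exists t0; rewrite /P t0l.
have ubP t : P t -> t <= l by case/andP.
case: (ex_minnP exP) => i0 /andP [i0l /eqP wi0] i0_min.
case: (ex_maxnP exP ubP) => i1 /andP [i1l /eqP wi1] i1_max.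
have agree t : t <= l -> (t < i0) || (i1 < t) -> w t = w' t.
  move=> tl ti; apply/eqP; apply/negPn/negP => wt.
  have Pt : P t by rewrite /P tl.
  by move: ti (i0_min t Pt) (i1_max t Pt); lia.
have i0_gt0 : 0 < i0 by case: i0 wi0 {i0l i0_min agree}.
have i1_lt : i1 < l by rewrite ltn_neqAle i1l andbT; apply/eqP => e; apply: wi1; rewrite e.
have i01 : i0 <= i1 by apply: i0_min; rewrite /P i1l; apply/eqP.
have [c [cw cnb c0]] : exists c, [/\ walk c (i1.+1 - i0.-1).*2,
    nonbacktracking c (i1.+1 - i0.-1).*2 & c 0 = c (i1.+1 - i0.-1).*2].
  apply: (splice_closed_walk (l := l) (j := i0.-1)) ww ww' wnb wnb' _ _ _; try lia.
  - by apply: agree; lia.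
  - by apply: agree; lia.
  - have -> : (i0.-1 + (i1.+1 - i0.-1)).-1 = i1 by lia.
    exact/eqP.
by apply: (no_short_closed_walk (L := (i1.+1 - i0.-1).*2)) cw cnb c0; lia.
Qed.

(* The state after t steps: (previous vertex, current vertex). *)
Fixpoint steer (next : V -> V -> nat -> V) (v0 : V) (tau : nat -> nat) t : V * V :=
  if t is t'.+1 then let q := steer next v0 tau t' in (q.2, next q.2 q.1 (tau t'))
  else (v0, v0).

Definition steered next (v0 : V) tau t := (steer next v0 tau t).2.

Lemma steered_walkP (W : {set V}) q next v0 tau : v0 \in W ->
  (forall u pr j, u \in W -> j < q -> next u pr j \in [set w in W | adj u w & w != pr]) ->
  (forall t, t < k -> tau t < q) ->
  [/\ forall t, t <= k -> steered next v0 tau t \in W,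
      walk (steered next v0 tau) k & nonbacktracking (steered next v0 tau) k].
Proof.
move=> v0W nextP tau_q; set w := steered next v0 tau.
have stepP t : t < k -> w t \in W ->
    [&& w t.+1 \in W, adj (w t) (w t.+1) & w t.+1 != (steer next v0 tau t).1].
  move=> tk wW; have := nextP _ (steer next v0 tau t).1 _ wW (tau_q t tk).
  by rewrite inE; apply.
have wW t : t <= k -> w t \in W.
  by elim: t => [|t IH] tk //; case/and3P: (stepP t tk (IH (ltnW tk))).
split => // t tk; first by case/and3P: (stepP t tk (wW t (ltnW tk))).
by case/and3P: (stepP t.+1 tk (wW t.+1 (ltnW tk))) => _ _; rewrite eq_sym.
Qed.

(* Steering by the q^k sequences of choices of a neighbour other than the
   previous vertex gives distinct endpoints, by uniqueness of short
   non-backtracking walks. *)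
Lemma count_nonbacktracking_walks (W : {set V}) q v0 :
  v0 \in W -> {in W, forall u, q < deg adj W u} ->
  q ^ k <= #|[set v in W | side v == side v0 (+) odd k]|.
Proof.
move=> v0W W_deg.
pose nbr u pr := [set w in W | adj u w & w != pr].
have nbr_card u pr : u \in W -> q <= #|nbr u pr|.
  move=> uW; have : [set w in W | adj u w] \subset pr |: nbr u pr.
    by apply/subsetP => w; rewrite !inE; case: (w =P pr) => //= _ /andP [-> ->].
  move/subset_leq_card; rewrite cardsU1 => le_deg.
  by have := W_deg u uW; rewrite /deg; move: le_deg; case: (_ \notin _) => /=; lia.
pose next u pr j := nth v0 (enum (nbr u pr)) j.
have nextP u pr j : u \in W -> j < q -> next u pr j \in nbr u pr.
  by move=> uW jq; rewrite -mem_enum mem_nth // -cardE (leq_trans jq (nbr_card _ _ uW)).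
pose tau (f : {ffun 'I_k -> 'I_q}) t := if insub t is Some i then nat_of_ord (f i) else 0.
have tauE f (i : 'I_k) : tau f i = f i by rewrite /tau valK.
have tau_q f t : t < k -> tau f t < q by move=> tk; rewrite -[t]/(val (Ordinal tk)) tauE.
pose w f := steered next v0 (tau f).
have [wW w_walk w_nb] : [/\ forall f t, t <= k -> w f t \in W,
    forall f, walk (w f) k & forall f, nonbacktracking (w f) k].
  by split=> f; case: (steered_walkP v0W nextP (tau_q f)).
have w_inj : injective (fun f => w f k).
  move=> f f' /= wk.
  have ww := nonbacktracking_walk_uniq (leqnn k) (w_walk f) (w_walk f')
    (w_nb f) (w_nb f') erefl wk.
  have steerE t : t <= k -> steer next v0 (tau f) t = steer next v0 (tau f') t.
    case: t => [|t] tk //=; congr (_, _); [exact: ww (ltnW tk) | exact: ww t.+1 tk].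
  apply/ffunP => i; apply: val_inj.
  have := ww i.+1 (ltn_ord i); rewrite /w /steered /= (steerE i (ltnW (ltn_ord i))).
  set u := steer next v0 (tau f') i.
  have uW : u.2 \in W by exact: wW f' i (ltnW (ltn_ord i)).
  have size_nbr f0 : tau f0 i < size (enum (nbr u.2 u.1)).
    by rewrite tauE -cardE (leq_trans (ltn_ord _) (nbr_card _ _ uW)).
  by move/eqP; rewrite nth_uniq ?enum_uniq ?size_nbr // !tauE => /eqP.
have <- : #|[set w f k | f in [set: {ffun 'I_k -> 'I_q}]]| = q ^ k.
  by rewrite (card_imset _ w_inj) cardsT card_ffun !card_ord.
apply/subset_leq_card/subsetP => _ /imsetP [f _ ->].
by rewrite inE wW //= (walk_side (w_walk f)).
Qed.

End NonBacktrackingWalks.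

Definition label {T : zmodType} (e : T * T) : T := (e.1 - e.2)%R.

Section DifferenceGraph.
Variables (T : finZmodType) (E : {set T * T}).
Local Notation V := (bool * T)%type.

(* The bipartite graph with parts two copies of T: (false, x) and (true, y)
   are adjacent iff (x, y) \in E; such an edge is labelled x - y. *)
Definition diff_edge (u w : V) : T * T := if u.1 then (w.2, u.2) else (u.2, w.2).
Definition diff_adj : rel V := fun u w => (u.1 != w.1) && (diff_edge u w \in E).

Lemma diff_adj_sym : symmetric diff_adj.
Proof. by case=> [[] x] [[] y]; rewrite /diff_adj /diff_edge. Qed.

Lemma diff_adj_irr : irreflexive diff_adj.
Proof. by move=> u; rewrite /diff_adj eqxx. Qed.

Lemma diff_adj_side u w : diff_adj u w -> w.1 = ~~ u.1.
Proof. by case: u w => [[] x] [[] y]; rewrite /diff_adj. Qed.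

Lemma diff_edge_inj u w u' w' : diff_adj u w -> diff_adj u' w' ->
  diff_edge u w = diff_edge u' w' -> (u = u' /\ w = w') \/ (u = w' /\ w = u').
Proof.
by case: u w u' w' => [[] x] [[] y] [[] x'] [[] y'];
  rewrite /diff_adj /diff_edge //= => _ _ [-> ->]; auto.
Qed.

Lemma diff_step u w : diff_adj u w ->
  (u.2 - w.2 = if u.1 then - label (diff_edge u w) else label (diff_edge u w))%R.
Proof. by case: u w => [[] x] [[] y]; rewrite /diff_adj /label //= => _; rewrite opprB. Qed.

Section Cycle.
Variables (c : nat -> V) (h : nat).
Hypotheses (c_walk : walk diff_adj c h.*2) (c_closed : c 0 = c h.*2).

Let lab t := label (diff_edge (c t) (c t.+1)).

(* Up to a global sign, lab r.*2 - lab r.*2.+1 = (c r.*2).2 - (c r.*2.+2).2,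
   which telescopes around the cycle. *)
Lemma cycle_label_sum : (\sum_(r < h) lab r.*2 = \sum_(r < h) lab r.*2.+1)%R.
Proof.
have [s c0s] : {s | (c 0).1 = s} by exists (c 0).1.
have pair_step r : r < h -> ((c r.*2).2 - (c r.*2.+2).2 =
    if s then lab r.*2.+1 - lab r.*2 else lab r.*2 - lab r.*2.+1)%R.
  move=> rh.
  have a1 : diff_adj (c r.*2) (c r.*2.+1) by apply: c_walk; lia.
  have a2 : diff_adj (c r.*2.+1) (c r.*2.+2) by apply: c_walk; lia.
  have -> : ((c r.*2).2 - (c r.*2.+2).2 =
      ((c r.*2).2 - (c r.*2.+1).2) + ((c r.*2.+1).2 - (c r.*2.+2).2))%R.
    by rewrite addrA subrK.
  rewrite (diff_step a1) (diff_step a2) (diff_adj_side a1).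
  rewrite (walk_side diff_adj_side c_walk) ?odd_double ?addbF ?c0s; last lia.
  by case: s {c0s}; rewrite /= ?opprK // addrC.
have : (\sum_(0 <= r < h) ((c r.*2).2 - (c r.*2.+2).2) = 0)%R.
  rewrite (telescope_sumr_eq (fun r => - (c r.*2).2)%R) // ?double0 -?c_closed ?subrr //.
  by move=> r _; rewrite opprK addrC.
rewrite big_mkord (eq_bigr _ (fun (r : 'I_h) _ => pair_step r (ltn_ord r))).
by case: s {c0s pair_step}; rewrite sumrB => /eqP; rewrite subr_eq0 => /eqP.
Qed.

Hypotheses (h_gt1 : 1 < h) (c_uniq : forall t u, t < u < h.*2 -> c t != c u).

Lemma cycle_edge_inj t u : t < h.*2 -> u < h.*2 ->
  diff_edge (c t) (c t.+1) = diff_edge (c u) (c u.+1) -> t = u.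
Proof.
have c_inj t' u' : t' < h.*2 -> u' < h.*2 -> c t' = c u' -> t' = u'.
  move=> th uh ctu; case: (ltngtP t' u') => // [tu | ut].
  - by have := @c_uniq t' u'; rewrite tu uh ctu eqxx => /(_ isT).
  - by have := @c_uniq u' t'; rewrite ut th ctu eqxx => /(_ isT).
wlog tu : t u / t <= u.
  move=> W th uh e; case: (leqP t u) => [tu | /ltnW ut]; first exact: W.
  by symmetry; apply: W.
move=> th uh e.
have a1 : diff_adj (c t) (c t.+1) by exact: c_walk.
have a2 : diff_adj (c u) (c u.+1) by exact: c_walk.
case: (diff_edge_inj a1 a2 e) => [[/c_inj -> //] | [e1 e2]].
have [u_last | u_mid] := eqVneq u.+1 h.*2.
- have t0 : t = 0 by apply: c_inj; rewrite ?e1 ?u_last -?c_closed //; lia.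
  have := c_inj 1 u; rewrite -e2 t0 => /(_ _ uh erefl); lia.
- by have := c_inj t u.+1; rewrite e1 => /(_ th _ erefl); lia.
Qed.

Lemma cycle_label_sets : {in E &, injective label} ->
  exists A B : {set T}, [/\ A :|: B \subset label @: E, #|A| = h, #|B| = h,
    [disjoint A & B] & (\sum_(x in A) x = \sum_(x in B) x)%R].
Proof.
move=> label_inj.
have edgeE t : t < h.*2 -> diff_edge (c t) (c t.+1) \in E.
  by move=> th; have /andP [] := c_walk th.
have lab_inj t u : t < h.*2 -> u < h.*2 -> lab t = lab u -> t = u.
  by move=> th uh /label_inj e; apply: cycle_edge_inj => //; apply: e; apply: edgeE.
have even_lt (r : 'I_h) : r.*2 < h.*2 by rewrite ltn_double.
have odd_lt (r : 'I_h) : r.*2.+1 < h.*2 by rewrite -doubleS leq_double.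
have inj_even : injective (fun r : 'I_h => lab r.*2).
  by move=> r r' /(lab_inj _ _ (even_lt r) (even_lt r')) /double_inj /val_inj.
have inj_odd : injective (fun r : 'I_h => lab r.*2.+1).
  by move=> r r' /(lab_inj _ _ (odd_lt r) (odd_lt r')) [] /double_inj /val_inj.
exists [set lab r.*2 | r : 'I_h], [set lab r.*2.+1 | r : 'I_h]; split.
- apply/subsetP => _ /setUP [] /imsetP [r _ ->]; apply: imset_f; exact: edgeE.
- by rewrite card_imset // card_ord.
- by rewrite card_imset // card_ord.
- apply/pred0P => x /=; apply/negP => /andP [/imsetP [r _ ->] /imsetP [r' _]].
  by move/(lab_inj _ _ (even_lt r) (odd_lt r'))/(congr1 odd); rewrite /= !odd_double.
- rewrite !big_imset /=; first exact: cycle_label_sum.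
  + by move=> r r' _ _; apply: inj_odd.
  + by move=> r r' _ _; apply: inj_even.
Qed.

End Cycle.

Variables X Y : {set T}.

Definition diff_vertices : {set V} := [set v | if v.1 then v.2 \in Y else v.2 \in X].

Lemma card_diff_side b : #|[set v in diff_vertices | v.1 == b]| = #|if b then Y else X|.
Proof.
have -> : [set v in diff_vertices | v.1 == b] = pair b @: (if b then Y else X).
  apply/setP => -[b' x]; rewrite !inE /=.
  apply/idP/imsetP => [/andP [xb /eqP e] | [y yb [-> ->]]].
    by move: xb; rewrite e => xb; exists x => //; case: (b) xb.
  by rewrite eqxx andbT; move: yb; case: (b).
by apply: card_imset => x y [].
Qed.

Lemma card_diff_vertices : #|diff_vertices| = #|X| + #|Y|.
Proof.
rewrite -(cardsID [set v : V | v.1] diff_vertices) -(card_diff_side true).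
rewrite -(card_diff_side false) addnC.
by congr (_ + _); apply: eq_card => v; rewrite !inE; case: v.1; rewrite ?andbT ?andbF.
Qed.

(* Double counting of the incidences between diff_vertices and E. *)
Lemma degsum_diff_vertices : E \subset setX X Y -> #|E|.*2 <= degsum diff_adj diff_vertices.
Proof.
move=> EXY.
have Eside e : e \in E -> e.1 \in X /\ e.2 \in Y.
  by move/(subsetP EXY); case: e => x y /setXP.
pose inc (u : V) (e : T * T) := if u.1 then e.2 == u.2 else e.1 == u.2.
pose other (u : V) (e : T * T) : V := if u.1 then (false, e.1) else (true, e.2).
have inc_deg u : u \in diff_vertices ->
    \sum_(e in E) (inc u e : nat) <= deg diff_adj diff_vertices u.
  move=> uV; rewrite sum_bool_card -(@card_in_imset _ _ (other u)).
    apply: subset_leq_card; apply/subsetP => v /imsetP [e /setIdP [eE ie] ->].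
    have [ex ey] := Eside e eE.
    move: ie; rewrite /inc /other !inE /diff_adj /diff_edge.
    by case: u uV => [[] x] /= _ /eqP <-; rewrite ?ex ?ey -?surjective_pairing eE.
  move=> [a b] [a' b']; rewrite !inE /inc /other => /andP [_ ie] /andP [_ ie'].
  by case: u {uV} ie ie' => [[] x] /= /eqP -> /eqP -> [] ->.
have inc_edge e : e \in E -> \sum_(u in diff_vertices) (inc u e : nat) = 2.
  move=> eE; rewrite sum_bool_card.
  have [ex ey] := Eside e eE.
  have -> : [set u in diff_vertices | inc u e] = [set (false, e.1); (true, e.2)].
    apply/setP => -[[] x]; rewrite !inE /inc /= ?ex ?ey /=.
      by rewrite !xpair_eqE /= eq_sym; case: (x =P e.2) => [->|]; rewrite ?ey ?andbF.
    by rewrite !xpair_eqE /= orbF eq_sym; case: (x =P e.1) => [->|]; rewrite ?ex ?andbF.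
  by rewrite cards2.
apply: (@leq_trans (\sum_(u in diff_vertices) \sum_(e in E) (inc u e : nat))).
  rewrite exchange_big /= (eq_bigr (fun _ => 2)); last by move=> e; exact: inc_edge.
  by rewrite sum_nat_const muln2.
by apply: leq_sum => u uV; exact: inc_deg.
Qed.

End DifferenceGraph.

(* It suffices that (q+1)^k < k^k n; this fails only for k = 1 or n = 1,
   where m <= n^2 is enough. *)
Lemma moore_bound_arith k n m q : 0 < k -> 0 < n -> m <= n * n -> m <= n.*2 * q.+1 ->
  q ^ k <= n -> m ^ k < (k.*2) ^ k * n ^ k.+1.
Proof.
move=> k0 n0 mnn mq qn.
case: k k0 qn => [//|[_ _ | k _ qn]]; first by rewrite !expn1; nia.
have [n1 | n2] := leqP n 1.
  have n_1 : n = 1 by lia.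
  subst n; have m1 : m ^ k.+2 <= 1 by rewrite -(exp1n k.+2) leq_exp2r //; lia.
  by rewrite exp1n muln1 (leq_ltn_trans m1) // -{1}(exp1n k.+2) ltn_exp2r.
suff qk : q.+1 ^ k.+2 < k.+2 ^ k.+2 * n.
  apply: (@leq_ltn_trans ((n.*2 * q.+1) ^ k.+2)); first by rewrite leq_exp2r.
  have -> : k.+2.*2 ^ k.+2 * n ^ k.+3 = (n.*2) ^ k.+2 * (k.+2 ^ k.+2 * n).
    by rewrite -!mul2n !expnMn (expnSr n) mulnACA.
  by rewrite expnMn ltn_pmul2l // expn_gt0 double_gt0 n0.
case: q {mq} qn => [_ | q qn].
  by rewrite exp1n (leq_trans _ (leq_pmulr _ _)) // -(exp1n k.+2) ltn_exp2r.
have q2 : q.+2 ^ k.+2 <= 2 ^ k.+2 * q.+1 ^ k.+2 by rewrite -expnMn leq_exp2r //; lia.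
case: k q2 qn => [|k] q2 qn; first by nia.
apply: (leq_ltn_trans q2); rewrite (leq_ltn_trans (leq_mul (leqnn _) qn)) //.
by rewrite ltn_pmul2r ?ltn_exp2r //; lia.
Qed.

Lemma diff_graph_moore_bound (T : finZmodType) (E : {set T * T}) (X Y : {set T}) k n :
  0 < k -> #|X| = n -> #|Y| = n -> E \subset setX X Y -> 0 < #|E| ->
  (forall f L, 0 < L <= k.*2 -> walk (diff_adj E) f L ->
     nonbacktracking f L -> f 0 = f L -> False) ->
  #|E| ^ k < (k.*2) ^ k * n ^ k.+1.
Proof.
move=> k0 Xn Yn EXY E0 girth; set m := #|E| in E0 *.
have mnn : m <= n * n by rewrite -{1}Xn -Yn -cardsX subset_leq_card.
have n0 : 0 < n by case: n mnn {Xn Yn} => //; rewrite muln0; lia.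
pose q := m.-1 %/ n.*2.
have n2 : 0 < n.*2 by rewrite double_gt0.
have q_lt : n.*2 * q < m by rewrite mulnC; apply: leq_ltn_trans (leq_divM _ _) _; lia.
have q_ge : m <= n.*2 * q.+1 by rewrite mulnC; have := ltn_ceil m.-1 n2; lia.
have dense : (q * #|diff_vertices X Y|).*2 < degsum (diff_adj E) (diff_vertices X Y).
  apply: leq_trans (degsum_diff_vertices EXY).
  by rewrite card_diff_vertices Xn Yn addnn -doubleMr ltn_double mulnC doubleMl.
have [W WV [/set0Pn [v0 v0W] W_deg]] :=
  exists_min_degree_subgraph (@diff_adj_sym _ E) (@diff_adj_irr _ E) dense.
have := count_nonbacktracking_walks (@diff_adj_side _ E) (@diff_adj_sym _ E) girth v0W W_deg.
rewrite setIdE => /leq_trans/(_ (subset_leq_card (setSI _ WV))).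
rewrite -setIdE card_diff_side => qn.
apply: moore_bound_arith k0 n0 mnn q_ge _.
by case: (_ (+) _) qn; rewrite ?Xn ?Yn.
Qed.

Lemma distinct_ksums_padded p k (S A B : {set 'F_p}) : distinct_ksums k S ->
  A \subset S -> B \subset S -> #|A| = #|B| -> #|A| <= k ->
  #|A :|: B| + (k - #|A|) <= #|S| ->
  (\sum_(x in A) x = \sum_(x in B) x)%R -> A = B.
Proof.
move=> hS AS BS AB Ak room sumAB.
have [C CS cardC] : exists2 C : {set 'F_p}, C \subset S :\: (A :|: B) & #|C| = k - #|A|.
  apply: exists_subset_card.
  by rewrite cardsD (setIidPr _) ?subUset ?AS //; lia.
have dUC : [disjoint A :|: B & C].
  apply/pred0P => x /=; apply/negbTE/negP => /andP [xAB /(subsetP CS)].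
  by rewrite in_setD xAB.
have dAC : [disjoint A & C] by apply: disjointWl dUC; apply: subsetUl.
have dBC : [disjoint B & C] by apply: disjointWl dUC; apply: subsetUr.
have padE (D : {set 'F_p}) : [disjoint D & C] ->
    #|D :|: C| = #|D| + #|C| /\ (\sum_(x in D :|: C) x = \sum_(x in D) x + \sum_(x in C) x)%R.
  move=> dDC; rewrite cardsU (disjoint_setI0 dDC) cards0 subn0 -bigU //.
  by split => //; apply: eq_bigl => x; rewrite !inE.
have [cardAC sumAC] := padE A dAC.
have [cardBC sumBC] := padE B dBC.
have CS' : C \subset S by apply: subset_trans CS (subsetDl _ _).
have ACBC : A :|: C = B :|: C.
  apply: hS; rewrite ?subUset ?AS ?BS ?CS' ?cardAC ?cardBC -?AB ?cardC ?subnKC //.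
  by rewrite sumAC sumBC sumAB.
by rewrite -(setDidPl dAC) -(setDidPl dBC) -[A :\: C]setU0 -[B :\: C]setU0 -(setDv C) -!setDUl ACBC.
Qed.

Lemma card_hits_diffset p k (S X Y : {set 'F_p}) n : 0 < k -> distinct_ksums k S ->
  #|X| = n -> #|Y| = n -> 0 < #|S :&: diffset X Y| ->
  #|S :&: diffset X Y| ^ k < (k.*2) ^ k * n ^ k.+1.
Proof.
move=> k0 hS Xn Yn hits0; set H := S :&: diffset X Y in hits0 *.
have n0 : 0 < n.
  case/card_gt0P: hits0 => s /setIP [_ /imset2P [x y xX _ _]].
  by rewrite -Xn; apply/card_gt0P; exists x.
have [Sk | kS] := ltnP #|S| k.*2.
  have Hk : #|H| < k.*2 by apply: leq_ltn_trans Sk; apply/subset_leq_card/subsetIl.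
  apply: (@leq_trans (k.*2 ^ k)); first by rewrite ltn_exp2r.
  by rewrite -{1}(muln1 (_ ^ k)) leq_mul2l expn_gt0 n0 orbT.
have HXY : H \subset label @: setX X Y.
  apply/subsetP => _ /setIP [_ /imset2P [x y xX yY ->]].
  by apply/imsetP; exists (x, y); rewrite ?in_setX ?xX ?yY.
have [E EXY [label_inj labelE]] := exists_transversal HXY.
rewrite -labelE card_in_imset //; apply: diff_graph_moore_bound k0 Xn Yn EXY _ _.
  by rewrite -(card_in_imset label_inj) labelE.
move=> f L /andP [L0 Lk] fw fnb fL.
have [i [h [h1 ihL fi f_uniq]]] := closed_walk_even_cycle (@diff_adj_side _ E) fw fnb L0 fL.
have cw : walk (diff_adj E) (fun t => f (i + t)) h.*2.
  by move=> t th; rewrite addnS; apply: fw; lia.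
have [A [B [ABE cardA cardB dAB sumAB]]] :=
  cycle_label_sets cw (etrans (congr1 f (addn0 i)) fi) h1 f_uniq label_inj.
have ABS : A :|: B \subset S by rewrite (subset_trans ABE) // labelE subsetIl.
have AB : A = B.
  apply: distinct_ksums_padded hS _ _ _ _ _ sumAB.
  - by apply: subset_trans ABS; apply: subsetUl.
  - by apply: subset_trans ABS; apply: subsetUr.
  - by rewrite cardA cardB.
  - rewrite cardA; lia.
  - rewrite cardsU (disjoint_setI0 dAB) cards0 subn0 cardA cardB; lia.
move: (disjoint_setI0 dAB); rewrite -AB setIid => A0.
by move: cardA; rewrite A0 cards0; lia.
Qed.

Import Order.TTheory.
Local Open Scope ring_scope.

Lemma powR_ratio_lt (R : realType) (b c : R) k :
  0 <= b -> 0 <= c -> b ^+ k < c ^+ k.+1 -> b `^ (k%:R / k.+1%:R) < c.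
Proof.
move=> b0 c0 bc; rewrite ltNge; apply/negP => cb.
have : c ^+ k.+1 <= b ^+ k.
  have -> : b ^+ k = (b `^ (k%:R / k.+1%:R)) ^+ k.+1.
    by rewrite -[RHS]powR_mulrn ?powR_ge0 // -powRrM divfK ?pnatr_eq0 // powR_mulrn.
  by rewrite ler_pXn2r // nnegrE ?powR_ge0.
by rewrite leNgt bc.
Qed.

Theorem theorem7 (R : realType) (p : nat) (alpha : R) (k : nat) (S : {set 'F_p})
  (pp : prime p) (a0 : 0 < alpha) (a1 : alpha <= 1) (k0 : (0 < k)%N)
  (Sne : (0 < #|S|)%N) (hS : distinct_ksums k S) :
  powR (alpha * (#|S|)%:R / (2 * k)%:R) (k%:R / (k.+1)%:R)
    < (bsgs1_complexity S a1)%:R.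
Proof.
set C := bsgs1_complexity S a1.
have : bsgs1_ok alpha S C by rewrite /C /bsgs1_complexity; case: ex_minnP.
case/existsP => X /existsP [Y /and3P [/eqP XC /eqP YC hit]].
set m := #|S :&: diffset X Y| in hit.
have m0 : (0 < m)%N.
  by rewrite -(ltr0n R); apply: lt_le_trans hit; rewrite mulr_gt0 // ltr0n.
have kR : 0 < (2 * k)%:R :> R by rewrite ltr0n muln_gt0 k0.
have alpha0 := ltW a0.
apply: powR_ratio_lt; rewrite ?divr_ge0 ?mulr_ge0 ?ler0n ?alpha0 ?(ltW kR) //.
apply: (@le_lt_trans _ _ ((m%:R / (2 * k)%:R) ^+ k)).
  by rewrite lerXn2r ?nnegrE ?divr_ge0 ?mulr_ge0 ?ler0n ?alpha0 ?(ltW kR) // ler_pM2r ?invr_gt0.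
rewrite expr_div_n ltr_pdivrMr ?exprn_gt0 // -!natrX -natrM ltr_nat mulnC mul2n.
exact: card_hits_diffset k0 hS XC YC m0.
Qed.
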